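(* Let $N$ be a positive integer and $t>-\log N$. For integers $n\ge N$ let $$\theta_n(t,N)=\int_N^n\frac{dx}{t+\log x}-\sum_{k=N}^{n-1}\frac{1}{H_k-\gamma+t}.$$ (1) The sequence $(\theta_n(t,N))_{n>N}$ is positive, strictly increasing and bounded above; hence $\theta(t,N)=\lim_{n\to\infty}\theta_n(t,N)>0$ exists. (2) For all integers $n\ge N$ one has $\theta(t,N)-\theta_n(t,N)=\theta(t,n)$ and $$\int_{n+1}^\infty\frac{dx}{24x^2(t+\log x)^2}+\frac{1}{24(n+1)(t+\log(n+1))^2}\le\theta(t,n)$$ $$\le\int_n^\infty\frac{dx}{24x^2(t+\log x)^2}+\frac{1}{24(n+\frac12)(t+\log(n+\frac12))^2}+\frac{1}{24n^2(t+\log n)^2}+\frac{1}{12n^2(t+\log n)^3}.$$ (3) $\theta(t,N)=\theta_n(t,N)+\frac{1+o(1)}{12n(\log n)^2}$ as $n\to\infty$, and $\theta(t,N)=O\!\left(\frac{1}{Nt^2}\right)$ as $t\to\infty$, where the implied constant does not depend on $N$.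
   Context: $\gamma$ is the Euler–Mascheroni constant and $H_k=\sum_{j=1}^k1/j$ is the $k$-th harmonic number. *)

From Stdlib Require Import Reals Lra Lia List Classical ClassicalEpsilon.
Open Scope R_scope.

Fixpoint harm (k : nat) : R :=
  match k with
  | O => 0
  | S k' => harm k' + / INR (S k')
  end.

(* sum_{k=a}^{b-1} f k  (empty if b <= a) *)
Definition sum_range (f : nat -> R) (a b : nat) : R :=
  fold_right Rplus 0 (map f (seq a (b - a))).

(* Riemann integral of f over [a,b] (Stdlib's RiemannInt); 0 if not integrable.
   RiemannInt does not depend on the integrability proof (RiemannInt_P5). *)
Definition RInt (f : R -> R) (a b : R) : R :=
  match excluded_middle_informative (inhabited (Riemann_integrable f a b)) with
  | left H => RiemannInt (epsilon H (fun _ => True))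
  | right _ => 0
  end.

Definition improper_int_cv (f : R -> R) (a l : R) : Prop :=
  forall eps, 0 < eps -> exists M, forall b, M <= b -> Rabs (RInt f a b - l) < eps.

Definition theta_n (gamma t : R) (N n : nat) : R :=
  RInt (fun x => / (t + ln x)) (INR N) (INR n)
  - sum_range (fun k => / (harm k - gamma + t)) N n.

(* theta(t,N) = lim_{n -> oo} theta_n(t,N) (an arbitrary value if no limit) *)
Definition theta (gamma t : R) (N : nat) : R :=
  epsilon (inhabits 0) (fun l => Un_cv (fun n => theta_n gamma t N n) l).

(* With f x := 1 / (t + ln x), theta_n(t,N) is the sum over N <= k < n of
   a_k := \int_k^{k+1} f - 1 / (H_k - gamma + t).  Two estimates control a_k:
   - the midpoint rule, with f''' <= 0, gives \int_k^{k+1} f = f (k + 1/2) + f''(xi) / 24;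
   - monotonicity of the telescoping differences shows that
     D_k := H_k - gamma - ln (k + 1/2) lies between 1 / (24 (k+1)^2) and
     1 / (24 (k + 1/2)^2), so that f (k + 1/2) - 1 / (H_k - gamma + t) is squeezed between
     values of g x := 1 / (24 x^2 (t + ln x)^2) near k.
   Hence a_k > 0 and a_k is bounded by values of g and of f''/24 = g (1 + 2 / (t + ln x)),
   whose primitive -1 / (24 x (t + ln x)^2) is explicit.  Summing these bounds gives
   monotonicity, convergence and the tail estimates of (2); both sides of (2) are
   asymptotic to 1 / (12 n (ln n)^2) and of order 1 / (N t^2), which gives (3). *)

From Pilot Require Import Defs.
From Stdlib Require Import Reals Lra Lia List Classical ClassicalEpsilon.
From Coquelicot Require Import Coquelicot.
Open Scope R_scope.

Lemma is_derive_continuous (f : R -> R) x l : is_derive f x l -> continuous f x.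
Proof. intros H. apply (@ex_derive_continuous R_AbsRing R_NormedModule). now exists l. Qed.

Lemma MVT_on (f df : R -> R) a b x y :
  (forall z, a <= z <= b -> is_derive f z (df z)) ->
  a <= x -> x <= y -> y <= b ->
  exists c, x <= c <= y /\ f y - f x = df c * (y - x).
Proof.
  intros Hd Hax Hxy Hyb.
  destruct (MVT_gen f x y df) as [c [Hc E]].
  - intros z Hz. rewrite Rmin_left, Rmax_right in Hz by lra. apply Hd; lra.
  - intros z Hz. rewrite Rmin_left, Rmax_right in Hz by lra.
    apply continuity_pt_filterlim, (is_derive_continuous _ _ (df z)), Hd; lra.
  - rewrite Rmin_left, Rmax_right in Hc by lra. now exists c.
Qed.

Lemma derive_nonneg_nondecreasing (f df : R -> R) a b :
  (forall z, a <= z <= b -> is_derive f z (df z)) ->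
  (forall z, a <= z <= b -> 0 <= df z) ->
  forall x y, a <= x -> x <= y -> y <= b -> f x <= f y.
Proof.
  intros Hd Hp x y Hax Hxy Hyb.
  destruct (MVT_on f df a b x y) as [c [Hc E]]; auto.
  assert (0 <= df c) by (apply Hp; lra). nra.
Qed.

Lemma derive_nonpos_nonincreasing (f df : R -> R) a b :
  (forall z, a <= z <= b -> is_derive f z (df z)) ->
  (forall z, a <= z <= b -> df z <= 0) ->
  forall x y, a <= x -> x <= y -> y <= b -> f y <= f x.
Proof.
  intros Hd Hp x y Hax Hxy Hyb.
  enough (- f x <= - f y) by lra.
  apply (derive_nonneg_nondecreasing (fun z => - f z) (fun z => - df z) a b); auto.
  - intros z Hz. exact (is_derive_opp f z (df z) (Hd z Hz)).
  - intros z Hz. specialize (Hp z Hz). lra.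
Qed.

Lemma convex_tangent_le (f df ddf : R -> R) a b m x :
  (forall z, a <= z <= b -> is_derive f z (df z)) ->
  (forall z, a <= z <= b -> is_derive df z (ddf z)) ->
  (forall z, a <= z <= b -> 0 <= ddf z) ->
  a <= m <= b -> a <= x <= b -> f m + df m * (x - m) <= f x.
Proof.
  intros Hf Hdf Hddf Hm Hx.
  destruct (Rle_or_lt m x) as [Hmx|Hxm].
  - destruct (MVT_on f df a b m x) as [c [Hc E]]; auto; try lra.
    assert (df m <= df c)
      by (apply (derive_nonneg_nondecreasing df ddf a b); auto; lra).
    nra.
  - destruct (MVT_on f df a b x m) as [c [Hc E]]; auto; try lra.
    assert (df c <= df m)
      by (apply (derive_nonneg_nondecreasing df ddf a b); auto; lra).
    nra.
Qed.

Lemma ex_RInt_of_is_derive (f df : R -> R) a b : a <= b ->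
  (forall z, a <= z <= b -> is_derive f z (df z)) -> ex_RInt f a b.
Proof.
  intros Hab Hd. apply (@ex_RInt_continuous R_CompleteNormedModule). intros z Hz.
  rewrite Rmin_left, Rmax_right in Hz by lra.
  apply (is_derive_continuous _ _ (df z)), Hd; lra.
Qed.

Lemma RInt_of_is_derive (F f : R -> R) a b : a <= b ->
  (forall z, a <= z <= b -> is_derive F z (f z)) ->
  (forall z, a <= z <= b -> continuous f z) ->
  RInt f a b = F b - F a.
Proof.
  intros Hab Hd Hc. apply is_RInt_unique, (is_RInt_derive F f a b);
    intros z Hz; rewrite Rmin_left, Rmax_right in Hz by lra; auto.
Qed.

Lemma RInt_midpoint_quadratic A B C a :
  RInt (fun z => A + B * (z - (a + /2)) + C * (z - (a + /2)) ^ 2 / 2) a (a + 1)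
  = A + C / 24.
Proof.
  rewrite (RInt_of_is_derive
     (fun z => A * z + B * (z - (a + /2)) ^ 2 / 2 + C * (z - (a + /2)) ^ 3 / 6)).
  - simpl. field.
  - lra.
  - intros z _. auto_derive; auto. field.
  - intros z _. apply (is_derive_continuous _ _ (B + C * (z - (a + /2)))).
    auto_derive; auto. field.
Qed.

(* Midpoint rule: the second-order Taylor bound at [a + 1/2] integrates to [c/24]. *)
Lemma midpoint_rule_lower (f df ddf : R -> R) a c :
  (forall z, a <= z <= a + 1 -> is_derive f z (df z)) ->
  (forall z, a <= z <= a + 1 -> is_derive df z (ddf z)) ->
  (forall z, a <= z <= a + 1 -> c <= ddf z) ->
  f (a + /2) + c / 24 <= RInt f a (a + 1).
Proof.
  intros Hf Hdf Hc.
  set (m := a + /2).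
  assert (Htaylor : forall z, a <= z <= a + 1 ->
            f m + df m * (z - m) + c * (z - m) ^ 2 / 2 <= f z).
  { intros z Hz.
    assert (T := convex_tangent_le (fun z => f z - c * (z - m) ^ 2 / 2)
                   (fun z => df z - c * (z - m)) (fun z => ddf z - c) a (a + 1) m z).
    simpl in T.
    enough (f m - c * ((m - m) * ((m - m) * 1)) / 2 + (df m - c * (m - m)) * (z - m)
            <= f z - c * ((z - m) * ((z - m) * 1)) / 2) by (simpl; nra).
    apply T; unfold m in *; try lra.
    - intros y Hy. apply (is_derive_minus f); [now apply Hf|]. auto_derive; auto. field.
    - intros y Hy. apply (is_derive_minus df); [now apply Hdf|]. auto_derive; auto. field.
    - intros y Hy. specialize (Hc y Hy). lra. }
  rewrite <- (RInt_midpoint_quadratic (f m) (df m) c a). fold m.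
  apply RInt_le; [lra| | |].
  - apply (@ex_RInt_continuous R_CompleteNormedModule). intros z _.
    apply (is_derive_continuous _ _ (df m + c * (z - m))). auto_derive; auto. field.
  - apply (ex_RInt_of_is_derive f df); auto. lra.
  - intros z Hz. apply Htaylor. lra.
Qed.

Lemma midpoint_rule_upper (f df ddf : R -> R) a c :
  (forall z, a <= z <= a + 1 -> is_derive f z (df z)) ->
  (forall z, a <= z <= a + 1 -> is_derive df z (ddf z)) ->
  (forall z, a <= z <= a + 1 -> ddf z <= c) ->
  RInt f a (a + 1) <= f (a + /2) + c / 24.
Proof.
  intros Hf Hdf Hc.
  assert (Hex : ex_RInt f a (a + 1)) by (apply (ex_RInt_of_is_derive f df); auto; lra).
  assert (H := midpoint_rule_lower (fun z => - f z) (fun z => - df z)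
                 (fun z => - ddf z) a (- c)).
  assert (E : RInt (fun z => - f z) a (a + 1) = - RInt f a (a + 1))
    by exact (RInt_opp f a (a + 1) Hex).
  rewrite E in H.
  enough (- f (a + /2) + - c / 24 <= - RInt f a (a + 1)) by lra.
  apply H; intros z Hz.
  - exact (is_derive_opp f z (df z) (Hf z Hz)).
  - exact (is_derive_opp df z (ddf z) (Hdf z Hz)).
  - specialize (Hc z Hz). lra.
Qed.

Lemma Defs_RInt_eq (f : R -> R) a b : ex_RInt f a b -> Defs.RInt f a b = RInt f a b.
Proof.
  intros H. unfold Defs.RInt.
  destruct (excluded_middle_informative _) as [Hi|Hn].
  - symmetry. apply RInt_Reals.
  - exfalso. apply Hn. constructor. now apply ex_RInt_Reals_0.
Qed.

Lemma nondecreasing_bounded_limit (F : R -> R) a B :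
  (forall x y, a <= x -> x <= y -> F x <= F y) ->
  (forall x, a <= x -> F x <= B) ->
  exists l, l <= B /\ (forall x, a <= x -> F x <= l) /\
    forall eps, 0 < eps -> exists M, a <= M /\ forall x, M <= x -> l - eps < F x.
Proof.
  intros Hmono Hub.
  set (E := fun v => exists x, a <= x /\ v = F x).
  destruct (completeness E) as [l [Hl Hlub]].
  - exists B. intros v [x [Hx ->]]. auto.
  - exists (F a), a. split; auto. lra.
  - exists l. split; [|split].
    + apply Hlub. intros v [x [Hx ->]]. auto.
    + intros x Hx. apply Hl. now exists x.
    + intros eps Heps.
      destruct (classic (exists x, a <= x /\ l - eps < F x)) as [[x0 [Hx0 Hlt]]|Hn].
      * exists x0. split; auto. intros x Hx.
        assert (F x0 <= F x) by (apply Hmono; auto). lra.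
      * exfalso. enough (l <= l - eps) by lra.
        apply Hlub. intros v [x [Hx ->]].
        apply Rnot_lt_le. intros Hlt. apply Hn. now exists x.
Qed.

Lemma lim_le_of_eventually_le (u : nat -> R) (l A : R) :
  is_lim_seq u l -> eventually (fun n => u n <= A) -> l <= A.
Proof.
  intros Hu Hev. apply (is_lim_seq_le_loc u (fun _ => A) l A); auto.
  apply is_lim_seq_const.
Qed.

Lemma nonincreasing_lim0_nonneg (w : nat -> R) k :
  (forall n, w (S n) <= w n) -> is_lim_seq w 0 -> 0 <= w k.
Proof.
  intros Hw Hlim. apply (lim_le_of_eventually_le w); auto.
  exists k. intros n Hn. induction Hn; [lra|]. specialize (Hw m). lra.
Qed.

Lemma nondecreasing_lim0_nonpos (w : nat -> R) k :
  (forall n, w n <= w (S n)) -> is_lim_seq w 0 -> w k <= 0.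
Proof.
  intros Hw Hlim.
  enough (0 <= - w k) by lra.
  apply (nonincreasing_lim0_nonneg (fun n => - w n)).
  - intros n. specialize (Hw n). lra.
  - replace (Finite 0) with (Rbar_opp 0) by (simpl; f_equal; ring).
    apply (is_lim_seq_opp w 0). exact Hlim.
Qed.

Lemma lim0_of_le_div_INR (v : nat -> R) C :
  eventually (fun n => 0 <= v n <= C / INR n) -> is_lim_seq v 0.
Proof.
  intros Hv. apply (is_lim_seq_le_le_loc (fun _ => 0) v (fun n => C * / INR n)); auto.
  - apply is_lim_seq_const.
  - replace (Finite 0) with (Finite (C * 0)) by (f_equal; ring).
    apply is_lim_seq_mult'; [apply is_lim_seq_const|].
    replace (Finite 0) with (Rbar_inv p_infty) by reflexivity.
    apply is_lim_seq_inv; [apply is_lim_seq_INR|discriminate].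
Qed.

Ltac solve_pos :=
  repeat (apply Rmult_lt_0_compat || apply pow_lt || apply Rinv_0_lt_compat); try lra.

Lemma INR_ge_1 n : (1 <= n)%nat -> 1 <= INR n.
Proof. intros H. exact (le_INR 1 n H). Qed.

Lemma ln_1p_le y : 0 < 1 + y -> ln (1 + y) <= y.
Proof. intros H. rewrite <- (ln_exp y) at 2. apply ln_le; auto. apply exp_ineq1_le. Qed.

Lemma ln_shift_lim c : 0 <= c -> is_lim_seq (fun n => ln (INR n + c) - ln (INR n)) 0.
Proof.
  intros Hc. apply (lim0_of_le_div_INR _ c). exists 1%nat. intros n Hn.
  assert (Hn1 := INR_ge_1 n Hn).
  assert (0 <= c / INR n) by (apply Rmult_le_pos; [lra|left; solve_pos]).
  replace (INR n + c) with (INR n * (1 + c / INR n)) by (field; lra).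
  rewrite ln_mult by lra.
  split.
  - rewrite <- ln_1. assert (ln 1 <= ln (1 + c / INR n)) by (apply ln_le; lra). lra.
  - assert (ln (1 + c / INR n) <= c / INR n) by (apply ln_1p_le; lra). lra.
Qed.

(* [ln (1 + u) - ln (1 - u) = 2 artanh u = 2 (u + u^3/3 + u^5/5 + ...)] *)
Lemma ln_ratio_bounds u : 0 <= u < 1 ->
  2 * u + 2 * u ^ 3 / 3 <= ln (1 + u) - ln (1 - u) <=
  2 * u + (2 * u ^ 3 / 3) / (1 - u ^ 2).
Proof.
  intros Hu.
  assert (E0 : ln (1 + 0) - ln (1 - 0) = 0).
  { replace (1 + 0) with 1 by ring. replace (1 - 0) with 1 by ring. rewrite ln_1. ring. }
  split.
  - enough (0 - (2 * 0 + 2 * 0 ^ 3 / 3)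
            <= ln (1 + u) - ln (1 - u) - (2 * u + 2 * u ^ 3 / 3)) by lra.
    rewrite <- E0 at 1.
    apply (derive_nonneg_nondecreasing
             (fun s => ln (1 + s) - ln (1 - s) - (2 * s + 2 * s ^ 3 / 3))
             (fun s => 2 * s ^ 4 / (1 - s ^ 2)) 0 u); try lra.
    + intros z Hz. auto_derive; [repeat split; lra|]. field. repeat split; try lra. nra.
    + intros z Hz. apply Rmult_le_pos; [apply Rmult_le_pos; [lra|apply pow_le; lra]|].
      left. apply Rinv_0_lt_compat. nra.
  - enough (0 - 0 <= 2 * u + (2 * u ^ 3 / 3) / (1 - u ^ 2)
                     - (ln (1 + u) - ln (1 - u))) by lra.
    rewrite <- E0 at 2.
    replace 0 with (2 * 0 + (2 * 0 ^ 3 / 3) / (1 - 0 ^ 2)) at 1 by (simpl; field).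
    apply (derive_nonneg_nondecreasing
             (fun s => 2 * s + (2 * s ^ 3 / 3) / (1 - s ^ 2) - (ln (1 + s) - ln (1 - s)))
             (fun s => (4 / 3) * s ^ 4 / (1 - s ^ 2) ^ 2) 0 u); try lra.
    + intros z Hz. assert (0 < 1 - z ^ 2) by nra.
      auto_derive; [repeat split; lra|]. field. repeat split; lra.
    + intros z Hz. assert (0 < 1 - z ^ 2) by nra.
      apply Rmult_le_pos; [apply Rmult_le_pos; [lra|apply pow_le; lra]|].
      left. solve_pos.
Qed.

Definition euler_gap (gamma : R) (k : nat) : R := harm k - gamma - ln (INR k + /2).

Lemma euler_gap_step gamma k :
  / (24 * (INR k + 1) ^ 2) - / (24 * (INR k + 2) ^ 2)
    <= euler_gap gamma k - euler_gap gamma (S k) <=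
  / (24 * (INR k + /2) ^ 2) - / (24 * (INR k + 3/2) ^ 2).
Proof.
  assert (Hk := pos_INR k).
  set (x := INR k + 1).
  assert (Hx : 1 <= x) by (unfold x; lra).
  set (u := / (2 * x)).
  assert (Hu : 0 <= u < 1).
  { unfold u, x. split; [left; solve_pos|].
    apply (Rmult_lt_reg_l (2 * (INR k + 1))); [lra|]. rewrite Rinv_r; lra. }
  assert (E : euler_gap gamma k - euler_gap gamma (S k) = ln (1 + u) - ln (1 - u) - 2 * u).
  { unfold euler_gap. cbn [harm]. rewrite S_INR.
    replace (INR k + 1 + /2) with (x * (1 + u)) by (unfold u, x; field; lra).
    replace (INR k + /2) with (x * (1 - u)) by (unfold u, x; field; lra).
    rewrite !ln_mult by (unfold u, x in *; lra).
    replace (/ (INR k + 1)) with (2 * u) by (unfold u, x; field; lra). ring. }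
  rewrite E. destruct (ln_ratio_bounds u Hu) as [L U].
  replace (INR k + 2) with (x + 1) by (unfold x; ring).
  replace (INR k + 1) with x by (unfold x; ring).
  replace (INR k + /2) with (x - /2) by (unfold x; field).
  replace (INR k + 3/2) with (x + /2) by (unfold x; field).
  unfold u in *. split.
  - assert (D : 2 * (/ (2 * x)) ^ 3 / 3 - (/ (24 * x ^ 2) - / (24 * (x + 1) ^ 2))
                = (3 * x + 2) / (24 * x ^ 3 * (x + 1) ^ 2)) by (field; lra).
    assert (0 <= (3 * x + 2) / (24 * x ^ 3 * (x + 1) ^ 2))
      by (apply Rmult_le_pos; [lra|left; solve_pos]).
    lra.
  - assert (D : (/ (24 * (x - /2) ^ 2) - / (24 * (x + /2) ^ 2))
                 - (2 * (/ (2 * x)) ^ 3 / 3) / (1 - (/ (2 * x)) ^ 2)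
                = / (48 * x * (x - /2) ^ 2 * (x + /2) ^ 2)).
    { field. repeat split; try lra. nra. }
    assert (0 <= / (48 * x * (x - /2) ^ 2 * (x + /2) ^ 2)) by (left; solve_pos).
    lra.
Qed.

Section EulerGap.

Variable gamma : R.
Hypothesis Hgamma : Un_cv (fun n => harm n - ln (INR n)) gamma.

Lemma euler_gap_lim0 : is_lim_seq (euler_gap gamma) 0.
Proof.
  apply is_lim_seq_ext with
    (fun n => (harm n - ln (INR n) - gamma) - (ln (INR n + /2) - ln (INR n))).
  { intros n. unfold euler_gap. ring. }
  replace (Finite 0) with (Finite ((gamma - gamma) - 0)) by (f_equal; ring).
  apply is_lim_seq_minus'; [|apply ln_shift_lim; lra].
  apply is_lim_seq_minus'; [now apply is_lim_seq_Reals|apply is_lim_seq_const].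
Qed.

Lemma euler_gap_lower k : / (24 * (INR k + 1) ^ 2) <= euler_gap gamma k.
Proof.
  set (w := fun n => euler_gap gamma n - / (24 * (INR n + 1) ^ 2)).
  enough (0 <= w k) by (unfold w in *; lra).
  apply nonincreasing_lim0_nonneg.
  - intros n. unfold w. rewrite S_INR. destruct (euler_gap_step gamma n) as [L _].
    replace (INR n + 1 + 1) with (INR n + 2) by ring. lra.
  - unfold w. replace (Finite 0) with (Finite (0 - 0)) by (f_equal; ring).
    apply is_lim_seq_minus'; [apply euler_gap_lim0|].
    apply (lim0_of_le_div_INR _ 1). exists 1%nat. intros n Hn.
    assert (Hn1 := INR_ge_1 n Hn). split; [left; solve_pos|].
    unfold Rdiv. rewrite Rmult_1_l. apply Rinv_le_contravar; [lra|nra].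
Qed.

Lemma euler_gap_upper k : euler_gap gamma k <= / (24 * (INR k + /2) ^ 2).
Proof.
  set (w := fun n => euler_gap gamma n - / (24 * (INR n + /2) ^ 2)).
  enough (w k <= 0) by (unfold w in *; lra).
  apply nondecreasing_lim0_nonpos.
  - intros n. unfold w. rewrite S_INR. destruct (euler_gap_step gamma n) as [_ U].
    replace (INR n + 1 + /2) with (INR n + 3/2) by field. lra.
  - unfold w. replace (Finite 0) with (Finite (0 - 0)) by (f_equal; ring).
    apply is_lim_seq_minus'; [apply euler_gap_lim0|].
    apply (lim0_of_le_div_INR _ 1). exists 1%nat. intros n Hn.
    assert (Hn1 := INR_ge_1 n Hn). split; [left; solve_pos|].
    unfold Rdiv. rewrite Rmult_1_l. apply Rinv_le_contravar; [lra|nra].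
Qed.

End EulerGap.

Definition log_dom (t x : R) : Prop := 0 < x /\ 0 < t + ln x.

Lemma log_dom_le t a x : log_dom t a -> a <= x -> log_dom t x.
Proof.
  intros [Ha HL] Hax. split; [lra|].
  assert (ln a <= ln x) by (apply ln_le; lra). lra.
Qed.

Ltac from_dom a := apply (log_dom_le _ a); [assumption|lra].

Ltac solve_derive :=
  intros [Hx HL]; auto_derive;
  [ repeat split; try lra; try (apply Rgt_not_eq; solve_pos)
  | field; repeat split; try lra; try (apply Rgt_not_eq; solve_pos) ].

Section InverseLog.

Variable t : R.

Definition inv_log x := / (t + ln x).
Definition inv_log1 x := - / (x * (t + ln x) ^ 2).
Definition inv_log2 x := (t + ln x + 2) / (x ^ 2 * (t + ln x) ^ 3).
Definition inv_log3 x :=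
  - (2 * (t + ln x) ^ 2 + 6 * (t + ln x) + 6) / (x ^ 3 * (t + ln x) ^ 4).
Definition inv_log4 x :=
  (6 * (t + ln x) ^ 3 + 22 * (t + ln x) ^ 2 + 36 * (t + ln x) + 24)
  / (x ^ 4 * (t + ln x) ^ 5).

Definition tail_integrand x := / (24 * x ^ 2 * (t + ln x) ^ 2).
Definition tail_integrand1 x := - (t + ln x + 1) / (12 * x ^ 3 * (t + ln x) ^ 3).
Definition tail_integrand2 x :=
  (3 * (t + ln x) ^ 2 + 5 * (t + ln x) + 3) / (12 * x ^ 4 * (t + ln x) ^ 4).

(* A primitive of [- inv_log2 / 24]; since [inv_log2 / 24 >= tail_integrand],
   it dominates the tails of [tail_integrand]. *)
Definition tail_majorant x := / (24 * x * (t + ln x) ^ 2).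

Lemma is_derive_inv_log x : log_dom t x -> is_derive inv_log x (inv_log1 x).
Proof. unfold inv_log, inv_log1. solve_derive. Qed.
Lemma is_derive_inv_log1 x : log_dom t x -> is_derive inv_log1 x (inv_log2 x).
Proof. unfold inv_log1, inv_log2. solve_derive. Qed.
Lemma is_derive_inv_log2 x : log_dom t x -> is_derive inv_log2 x (inv_log3 x).
Proof. unfold inv_log2, inv_log3. solve_derive. Qed.
Lemma is_derive_inv_log3 x : log_dom t x -> is_derive inv_log3 x (inv_log4 x).
Proof. unfold inv_log3, inv_log4. solve_derive. Qed.
Lemma is_derive_tail_integrand x :
  log_dom t x -> is_derive tail_integrand x (tail_integrand1 x).
Proof. unfold tail_integrand, tail_integrand1. solve_derive. Qed.
Lemma is_derive_tail_integrand1 x :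
  log_dom t x -> is_derive tail_integrand1 x (tail_integrand2 x).
Proof. unfold tail_integrand1, tail_integrand2. solve_derive. Qed.
Lemma is_derive_tail_majorant x :
  log_dom t x -> is_derive tail_majorant x (- (inv_log2 x / 24)).
Proof. unfold tail_majorant, inv_log2. solve_derive. Qed.

Lemma inv_log2_pos x : log_dom t x -> 0 < inv_log2 x.
Proof. intros [Hx HL]. unfold inv_log2. apply Rmult_lt_0_compat; solve_pos. Qed.

Lemma inv_log3_nonpos x : log_dom t x -> inv_log3 x <= 0.
Proof.
  intros [Hx HL]. unfold inv_log3, Rdiv. rewrite Ropp_mult_distr_l_reverse.
  enough (0 <= (2 * (t + ln x) ^ 2 + 6 * (t + ln x) + 6) * / (x ^ 3 * (t + ln x) ^ 4))
    by lra.
  apply Rmult_le_pos; [nra|left; solve_pos].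
Qed.

Lemma inv_log4_nonneg x : log_dom t x -> 0 <= inv_log4 x.
Proof.
  intros [Hx HL]. unfold inv_log4.
  assert (0 < (t + ln x) ^ 3) by solve_pos. assert (0 < (t + ln x) ^ 2) by solve_pos.
  apply Rmult_le_pos; [lra|left; solve_pos].
Qed.

Lemma tail_integrand_pos x : log_dom t x -> 0 < tail_integrand x.
Proof. intros [Hx HL]. unfold tail_integrand. solve_pos. Qed.

Lemma tail_integrand1_nonpos x : log_dom t x -> tail_integrand1 x <= 0.
Proof.
  intros [Hx HL]. unfold tail_integrand1, Rdiv. rewrite Ropp_mult_distr_l_reverse.
  enough (0 <= (t + ln x + 1) * / (12 * x ^ 3 * (t + ln x) ^ 3)) by lra.
  apply Rmult_le_pos; [lra|left; solve_pos].
Qed.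

Lemma tail_integrand2_nonneg x : log_dom t x -> 0 <= tail_integrand2 x.
Proof. intros [Hx HL]. unfold tail_integrand2. apply Rmult_le_pos; [nra|left; solve_pos]. Qed.

Lemma tail_majorant_pos x : log_dom t x -> 0 < tail_majorant x.
Proof. intros [Hx HL]. unfold tail_majorant. solve_pos. Qed.

Lemma inv_log2_tail_integrand x : log_dom t x ->
  inv_log2 x / 24 = tail_integrand x * (1 + 2 / (t + ln x)).
Proof. intros [Hx HL]. unfold inv_log2, tail_integrand. field. lra. Qed.

Lemma one_lt_tail_factor a : log_dom t a -> 1 < 1 + 2 / (t + ln a).
Proof. intros [_ HL]. assert (0 < 2 / (t + ln a)) by (unfold Rdiv; solve_pos). lra. Qed.

Lemma inv_log2_div24_eq x : log_dom t x ->
  inv_log2 x / 24 = / (24 * x ^ 2 * (t + ln x) ^ 2) + / (12 * x ^ 2 * (t + ln x) ^ 3).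
Proof. intros [Hx HL]. unfold inv_log2. field. lra. Qed.

Lemma inv_log2_nonincreasing a x y : log_dom t a -> a <= x -> x <= y ->
  inv_log2 y <= inv_log2 x.
Proof.
  intros Ha Hax Hxy.
  apply (derive_nonpos_nonincreasing inv_log2 inv_log3 a y); try lra; intros z Hz.
  - apply is_derive_inv_log2; from_dom a.
  - apply inv_log3_nonpos; from_dom a.
Qed.

Lemma tail_integrand_nonincreasing a x y : log_dom t a -> a <= x -> x <= y ->
  tail_integrand y <= tail_integrand x.
Proof.
  intros Ha Hax Hxy.
  apply (derive_nonpos_nonincreasing tail_integrand tail_integrand1 a y); try lra;
    intros z Hz.
  - apply is_derive_tail_integrand; from_dom a.
  - apply tail_integrand1_nonpos; from_dom a.
Qed.

Lemma tail_majorant_decreasing x y : log_dom t x -> x < y ->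
  tail_majorant y < tail_majorant x.
Proof.
  intros Hx Hxy.
  destruct (MVT_on tail_majorant (fun z => - (inv_log2 z / 24)) x y x y)
    as [c [Hc E]]; try lra.
  - intros z Hz. apply is_derive_tail_majorant; from_dom x.
  - assert (0 < inv_log2 c) by (apply inv_log2_pos; from_dom x). nra.
Qed.

Lemma tail_majorant_small a eps : log_dom t a -> 0 < eps ->
  exists M, a <= M /\ forall b, M <= b -> tail_majorant b <= eps.
Proof.
  intros Ha Heps. pose proof Ha as [Ha0 HLa]. set (La := t + ln a) in *.
  exists (a + / (24 * eps * La ^ 2)).
  assert (0 < / (24 * eps * La ^ 2)) by solve_pos.
  split; [lra|]. intros b Hb.
  assert (HLb : La <= t + ln b)
    by (assert (ln a <= ln b) by (apply ln_le; lra); unfold La; lra).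
  unfold tail_majorant. rewrite <- (Rinv_inv eps).
  apply Rinv_le_contravar; [solve_pos|].
  replace (/ eps) with (24 * / (24 * eps * La ^ 2) * La ^ 2) by (field; lra).
  assert (La ^ 2 <= (t + ln b) ^ 2) by (apply pow_incr; lra).
  assert (0 < La ^ 2) by solve_pos.
  apply Rle_trans with (24 * b * La ^ 2).
  - apply Rmult_le_compat_r; lra.
  - apply Rmult_le_compat_l; lra.
Qed.

Lemma ex_RInt_inv_log a b : log_dom t a -> a <= b -> ex_RInt inv_log a b.
Proof.
  intros Ha Hab. apply (ex_RInt_of_is_derive inv_log inv_log1); auto.
  intros z Hz. apply is_derive_inv_log; from_dom a.
Qed.

Lemma ex_RInt_tail_integrand a b : log_dom t a -> a <= b -> ex_RInt tail_integrand a b.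
Proof.
  intros Ha Hab. apply (ex_RInt_of_is_derive tail_integrand tail_integrand1); auto.
  intros z Hz. apply is_derive_tail_integrand; from_dom a.
Qed.

Lemma is_RInt_inv_log2 a b : log_dom t a -> a <= b ->
  is_RInt inv_log2 a b (24 * (tail_majorant a - tail_majorant b)).
Proof.
  intros Ha Hab.
  replace (24 * (tail_majorant a - tail_majorant b))
    with (minus (-24 * tail_majorant b) (-24 * tail_majorant a))
    by (unfold minus, plus, opp; simpl; ring).
  apply (is_RInt_derive (fun z => -24 * tail_majorant z) inv_log2);
    intros z Hz; rewrite Rmin_left, Rmax_right in Hz by lra.
  - replace (inv_log2 z) with (-24 * - (inv_log2 z / 24)) by field.
    apply is_derive_scal, is_derive_tail_majorant; from_dom a.
  - apply (is_derive_continuous _ _ (inv_log3 z)), is_derive_inv_log2; from_dom a.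
Qed.

Lemma is_RInt_inv_log2_scal a b c : log_dom t a -> a <= b ->
  is_RInt (fun z => c * inv_log2 z) a b (c * (24 * (tail_majorant a - tail_majorant b))).
Proof. intros Ha Hab. exact (is_RInt_scal _ a b c _ (is_RInt_inv_log2 a b Ha Hab)). Qed.

Lemma RInt_tail_integrand_le a b : log_dom t a -> a <= b ->
  RInt tail_integrand a b <= tail_majorant a - tail_majorant b.
Proof.
  intros Ha Hab.
  assert (H := is_RInt_inv_log2_scal a b (/ 24) Ha Hab).
  replace (tail_majorant a - tail_majorant b)
    with (/ 24 * (24 * (tail_majorant a - tail_majorant b))) by field.
  rewrite <- (is_RInt_unique _ _ _ _ H).
  apply RInt_le; [lra|apply ex_RInt_tail_integrand; auto|eexists; exact H|].
  intros z Hz. assert (Hz' : log_dom t z) by from_dom a.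
  assert (E := inv_log2_tail_integrand z Hz').
  assert (0 < tail_integrand z) by (apply tail_integrand_pos; auto).
  assert (0 < 2 / (t + ln z)) by (destruct Hz'; unfold Rdiv; solve_pos).
  nra.
Qed.

Lemma RInt_tail_integrand_ge a b : log_dom t a -> a <= b ->
  (tail_majorant a - tail_majorant b) / (1 + 2 / (t + ln a)) <= RInt tail_integrand a b.
Proof.
  intros Ha Hab. set (K := 1 + 2 / (t + ln a)).
  assert (HK : 1 < K) by now apply one_lt_tail_factor.
  assert (H := is_RInt_inv_log2_scal a b (/ (24 * K)) Ha Hab).
  replace ((tail_majorant a - tail_majorant b) / K)
    with (/ (24 * K) * (24 * (tail_majorant a - tail_majorant b))) by (field; lra).
  rewrite <- (is_RInt_unique _ _ _ _ H).
  apply RInt_le; [lra|eexists; exact H|apply ex_RInt_tail_integrand; auto|].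
  intros z Hz. assert (Hz' : log_dom t z) by from_dom a.
  replace (/ (24 * K) * inv_log2 z) with (inv_log2 z / 24 / K) by (field; lra).
  rewrite (inv_log2_tail_integrand z Hz').
  assert (0 < tail_integrand z) by (apply tail_integrand_pos; auto).
  assert (Hq : 2 / (t + ln z) <= K - 1).
  { unfold K. destruct Ha, Hz'. unfold Rdiv.
    enough (2 * / (t + ln z) <= 2 * / (t + ln a)) by lra.
    apply Rmult_le_compat_l; [lra|].
    apply Rinv_le_contravar; [lra|]. assert (ln a <= ln z) by (apply ln_le; lra). lra. }
  apply Rle_trans with (tail_integrand z * K / K); [|right; field; lra].
  unfold Rdiv at 1 2. apply Rmult_le_compat_r; [left; solve_pos|nra].
Qed.

Lemma tail_integral_exists a : log_dom t a ->
  exists I, improper_int_cv tail_integrand a I /\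
    (forall b, a <= b -> RInt tail_integrand a b <= I) /\
    tail_majorant a / (1 + 2 / (t + ln a)) <= I <= tail_majorant a.
Proof.
  intros Ha.
  assert (Hmono : forall x y, a <= x -> x <= y ->
            RInt tail_integrand a x <= RInt tail_integrand a y).
  { intros x y Hx Hxy.
    rewrite <- (RInt_Chasles tail_integrand a x y);
      [|apply ex_RInt_tail_integrand; auto|apply ex_RInt_tail_integrand; [from_dom a|auto]].
    enough (0 <= RInt tail_integrand x y) by (unfold plus; simpl; lra).
    apply RInt_ge_0; [lra|apply ex_RInt_tail_integrand; [from_dom a|auto]|].
    intros z Hz. left. apply tail_integrand_pos; from_dom a. }
  destruct (nondecreasing_bounded_limit (RInt tail_integrand a) a (tail_majorant a))
    as [I [HIub [HIle HIapprox]]]; auto.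
  { intros b Hb. assert (0 < tail_majorant b) by (apply tail_majorant_pos; from_dom a).
    assert (RInt tail_integrand a b <= tail_majorant a - tail_majorant b)
      by (apply RInt_tail_integrand_le; auto). lra. }
  exists I. split; [|split; [auto|split; [|auto]]].
  - intros eps Heps. destruct (HIapprox eps Heps) as [M [HM HMb]].
    exists M. intros b Hb.
    rewrite Defs_RInt_eq by (apply ex_RInt_tail_integrand; auto; lra).
    specialize (HMb b Hb). assert (RInt tail_integrand a b <= I) by (apply HIle; lra).
    apply Rabs_def1; lra.
  - set (K := 1 + 2 / (t + ln a)).
    assert (HK : 1 < K) by now apply one_lt_tail_factor.
    apply Rle_plus_epsilon. intros eps Heps.
    destruct (tail_majorant_small a (eps * K) Ha) as [M [HM HMb]]; [nra|].
    specialize (HMb M (Rle_refl M)).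
    assert (H1 := RInt_tail_integrand_ge a M Ha HM). fold K in H1.
    assert (H2 := HIle M HM).
    assert ((tail_majorant a - eps * K) / K <= (tail_majorant a - tail_majorant M) / K)
      by (unfold Rdiv; apply Rmult_le_compat_r; [left; solve_pos|lra]).
    replace ((tail_majorant a - eps * K) / K) with (tail_majorant a / K - eps) in *
      by (field; lra).
    lra.
Qed.

Lemma RInt_inv_log_unit_lower y : log_dom t y ->
  inv_log (y + /2) + inv_log2 (y + 1) / 24 <= RInt inv_log y (y + 1).
Proof.
  intros Hy. apply (midpoint_rule_lower inv_log inv_log1 inv_log2); intros z Hz.
  - apply is_derive_inv_log; from_dom y.
  - apply is_derive_inv_log1; from_dom y.
  - apply (inv_log2_nonincreasing y); auto; lra.
Qed.

Lemma RInt_inv_log_unit_upper y : log_dom t y ->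
  RInt inv_log y (y + 1) <= inv_log (y + /2) + inv_log2 y / 24.
Proof.
  intros Hy. apply (midpoint_rule_upper inv_log inv_log1 inv_log2); intros z Hz.
  - apply is_derive_inv_log; from_dom y.
  - apply is_derive_inv_log1; from_dom y.
  - apply (inv_log2_nonincreasing y); auto; lra.
Qed.

Lemma tail_majorant_unit_step y : log_dom t y ->
  tail_majorant y - tail_majorant (y + 1) <= inv_log2 y / 24.
Proof.
  intros Hy.
  destruct (MVT_on tail_majorant (fun z => - (inv_log2 z / 24)) y (y + 1) y (y + 1))
    as [c [Hc E]]; try lra.
  - intros z Hz. apply is_derive_tail_majorant; from_dom y.
  - assert (inv_log2 c <= inv_log2 y) by (apply (inv_log2_nonincreasing y); auto; lra). lra.
Qed.

Lemma RInt_tail_integrand_unit_le y : log_dom t y ->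
  RInt tail_integrand y (y + 1) <= tail_integrand y.
Proof.
  intros Hy.
  apply Rle_trans with (RInt (fun _ => tail_integrand y) y (y + 1)).
  - apply RInt_le; [lra|apply ex_RInt_tail_integrand; auto; lra|apply ex_RInt_const|].
    intros z Hz. apply (tail_integrand_nonincreasing y); auto; lra.
  - rewrite RInt_const. unfold scal; simpl; unfold mult; simpl. lra.
Qed.

Lemma tail_integrand_midpoint_le y : log_dom t y ->
  tail_integrand (y + /2) <= RInt tail_integrand y (y + 1).
Proof.
  intros Hy.
  enough (tail_integrand (y + /2) + 0 / 24 <= RInt tail_integrand y (y + 1)) by lra.
  apply (midpoint_rule_lower tail_integrand tail_integrand1 tail_integrand2);
    intros z Hz.
  - apply is_derive_tail_integrand; from_dom y.
  - apply is_derive_tail_integrand1; from_dom y.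
  - apply tail_integrand2_nonneg; from_dom y.
Qed.

Lemma inv_log2_le_tail_majorant_diff y : log_dom t (y - /2) ->
  inv_log2 y / 24 <= tail_majorant (y - /2) - tail_majorant (y + /2).
Proof.
  intros Hy.
  assert (H := midpoint_rule_lower inv_log2 inv_log3 inv_log4 (y - /2) 0).
  replace (y - /2 + /2) with y in H by ring.
  replace (y - /2 + 1) with (y + /2) in H by field.
  rewrite (is_RInt_unique _ _ _ _ (is_RInt_inv_log2 (y - /2) (y + /2) Hy ltac:(lra))) in H.
  enough (inv_log2 y + 0 / 24 <= 24 * (tail_majorant (y - /2) - tail_majorant (y + /2)))
    by lra.
  apply H; intros z Hz.
  - apply is_derive_inv_log2; from_dom (y - /2).
  - apply is_derive_inv_log3; from_dom (y - /2).
  - apply inv_log4_nonneg; from_dom (y - /2).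
Qed.

End InverseLog.

Lemma log_dom_INR_ge_1 t k : log_dom t (INR k) -> 1 <= INR k.
Proof. intros [Hk _]. destruct k; [simpl in Hk; lra|]. apply INR_ge_1. lia. Qed.

Lemma log_dom_INR_le t N n : log_dom t (INR N) -> (N <= n)%nat -> log_dom t (INR n).
Proof. intros HN Hn. apply (log_dom_le t (INR N)); auto. now apply le_INR. Qed.

Lemma log_shift_lim_infty t c : is_lim_seq (fun n => t + ln (INR n + c)) p_infty.
Proof.
  apply (is_lim_seq_plus _ _ t p_infty); [apply is_lim_seq_const| |reflexivity].
  apply (is_lim_comp_seq ln _ p_infty p_infty is_lim_ln_p).
  - exists 0%nat. intros. discriminate.
  - apply (is_lim_seq_plus _ _ p_infty c); [apply is_lim_seq_INR|apply is_lim_seq_const|].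
    reflexivity.
Qed.

Lemma inv_log_shift_lim0 t c : is_lim_seq (fun n => / (t + ln (INR n + c))) 0.
Proof.
  replace (Finite 0) with (Rbar_inv p_infty) by reflexivity.
  apply is_lim_seq_inv; [apply log_shift_lim_infty|discriminate].
Qed.

Lemma log_ratio_lim1 t c : 0 <= c ->
  is_lim_seq (fun n => ln (INR n) / (t + ln (INR n + c))) 1.
Proof.
  intros Hc.
  apply is_lim_seq_ext_loc with
    (fun n => 1 - (t + (ln (INR n + c) - ln (INR n))) * / (t + ln (INR n + c))).
  - destruct (proj2 (is_lim_seq_spec _ _) (log_shift_lim_infty t c) 0) as [N HN].
    exists N. intros n Hn. specialize (HN n Hn). field. lra.
  - replace (Finite 1) with (Finite (1 - (t + 0) * 0)) by (f_equal; ring).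
    apply is_lim_seq_minus'; [apply is_lim_seq_const|].
    apply is_lim_seq_mult'; [|apply inv_log_shift_lim0].
    apply is_lim_seq_plus'; [apply is_lim_seq_const|now apply ln_shift_lim].
Qed.

Lemma sum_range_S (f : nat -> R) a b : (a <= b)%nat ->
  sum_range f a (S b) = sum_range f a b + f b.
Proof.
  intros Hab. unfold sum_range. replace (S b - a)%nat with (S (b - a)) by lia.
  rewrite seq_S, map_app, fold_right_app. simpl.
  replace (a + (b - a))%nat with b by lia.
  induction (map f (seq a (b - a))) as [|x l IH]; simpl; [ring|rewrite IH; ring].
Qed.

Lemma sum_range_diag (f : nat -> R) a : sum_range f a a = 0.
Proof. unfold sum_range. now rewrite Nat.sub_diag. Qed.

Definition theta_incr (gamma t : R) (k : nat) : R :=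
  RInt (inv_log t) (INR k) (INR k + 1) - / (harm k - gamma + t).

Lemma theta_n_diag gamma t N : theta_n gamma t N N = 0.
Proof.
  unfold theta_n. rewrite sum_range_diag, Defs_RInt_eq by apply ex_RInt_point.
  rewrite RInt_point. unfold zero; simpl. ring.
Qed.

Lemma theta_eq_lim gamma t N l :
  Un_cv (theta_n gamma t N) l -> theta gamma t N = l.
Proof.
  intros Hl. unfold theta.
  apply (UL_sequence (theta_n gamma t N)); auto.
  exact (epsilon_spec (inhabits 0) (fun l => Un_cv (fun n => theta_n gamma t N n) l)
           (ex_intro _ l Hl)).
Qed.

Section Theta.

Variable gamma : R.
Hypothesis Hgamma : Un_cv (fun n => harm n - ln (INR n)) gamma.
Variable t : R.

(* With [L := t + ln (k + 1/2)] and [D := euler_gap gamma k] we have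
   [1 / (H_k - gamma + t) = 1 / (L + D)], and the difference below is [D / (L (L + D))]. *)
Lemma inv_harm_bounds k : log_dom t (INR k) ->
  0 < harm k - gamma + t /\
  tail_integrand t (INR k + 1) <= inv_log t (INR k + /2) - / (harm k - gamma + t)
    <= tail_integrand t (INR k + /2).
Proof.
  intros Hk. assert (Hy := log_dom_INR_ge_1 t k Hk).
  assert (Dl := euler_gap_lower gamma Hgamma k).
  assert (Du := euler_gap_upper gamma Hgamma k).
  assert (Ec : harm k - gamma + t = (t + ln (INR k + /2)) + euler_gap gamma k)
    by (unfold euler_gap; ring).
  rewrite Ec.
  assert (Hm : log_dom t (INR k + /2)) by from_dom (INR k).
  assert (H1 : log_dom t (INR k + 1)) by from_dom (INR k).
  set (y := INR k) in *. set (D := euler_gap gamma k) in *.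
  destruct Hm as [_ Hm]. destruct H1 as [_ H1].
  set (Lm := t + ln (y + /2)) in *. set (L1 := t + ln (y + 1)) in *.
  assert (HD0 : 0 < D) by (eapply Rlt_le_trans; [|exact Dl]; solve_pos).
  assert (E : inv_log t (y + /2) - / (Lm + D) = D * / (Lm * (Lm + D)))
    by (unfold inv_log; fold Lm; field; lra).
  rewrite E. split; [lra|split].
  - assert (HmL1 : Lm <= L1)
      by (unfold Lm, L1; assert (ln (y + /2) <= ln (y + 1)) by (apply ln_le; lra); lra).
    assert (Hln : ln (y + /2) <= ln (y + 1) - / (2 * (y + 1))).
    { assert (/ (2 * (y + 1)) <= / 4) by (apply Rinv_le_contravar; lra).
      replace (y + /2) with ((y + 1) * (1 + - / (2 * (y + 1)))) by (field; lra).
      rewrite ln_mult by lra.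
      assert (ln (1 + - / (2 * (y + 1))) <= - / (2 * (y + 1))) by (apply ln_1p_le; lra).
      lra. }
    assert (HDsmall : D <= / (2 * (y + 1))).
    { apply Rle_trans with (/ (24 * (y + /2) ^ 2)); auto.
      apply Rinv_le_contravar; [lra|nra]. }
    assert (Hprod : Lm * (Lm + D) <= L1 ^ 2)
      by (simpl; rewrite Rmult_1_r; apply Rmult_le_compat; unfold Lm, L1 in *; lra).
    assert (Hinv : / (L1 ^ 2) <= / (Lm * (Lm + D)))
      by (apply Rinv_le_contravar; [solve_pos|auto]).
    unfold tail_integrand. fold L1. rewrite (Rinv_mult (24 * (y + 1) ^ 2)).
    apply Rmult_le_compat; auto; left; solve_pos.
  - assert (Hinv : / (Lm * (Lm + D)) <= / (Lm ^ 2)).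
    { apply Rinv_le_contravar; [solve_pos|]. simpl. rewrite Rmult_1_r.
      apply Rmult_le_compat_l; lra. }
    unfold tail_integrand. fold Lm. rewrite (Rinv_mult (24 * (y + /2) ^ 2)).
    apply Rmult_le_compat; auto; [lra|left; solve_pos].
Qed.

Lemma theta_incr_lower k : log_dom t (INR k) ->
  tail_majorant t (INR k + 1) - tail_majorant t (INR k + 2)
    + RInt (tail_integrand t) (INR k + 1) (INR k + 2) <= theta_incr gamma t k.
Proof.
  intros Hk. assert (Hk1 : log_dom t (INR k + 1)) by from_dom (INR k).
  destruct (inv_harm_bounds k Hk) as [_ [Hlo _]].
  assert (A1 := RInt_inv_log_unit_lower t (INR k) Hk).
  assert (A2 := tail_majorant_unit_step t (INR k + 1) Hk1).
  assert (A3 := RInt_tail_integrand_unit_le t (INR k + 1) Hk1).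
  replace (INR k + 2) with (INR k + 1 + 1) by ring.
  unfold theta_incr. lra.
Qed.

Lemma theta_incr_upper k : log_dom t (INR k) ->
  theta_incr gamma t k
    <= inv_log2 t (INR k) / 24 + RInt (tail_integrand t) (INR k) (INR k + 1).
Proof.
  intros Hk. destruct (inv_harm_bounds k Hk) as [_ [_ Hup]].
  assert (A1 := RInt_inv_log_unit_upper t (INR k) Hk).
  assert (A2 := tail_integrand_midpoint_le t (INR k) Hk).
  unfold theta_incr. lra.
Qed.

Lemma theta_incr_pos k : log_dom t (INR k) -> 0 < theta_incr gamma t k.
Proof.
  intros Hk. assert (Hk1 : log_dom t (INR k + 1)) by from_dom (INR k).
  assert (A1 := theta_incr_lower k Hk).
  assert (A2 := tail_majorant_decreasing t (INR k + 1) (INR k + 2) Hk1 ltac:(lra)).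
  assert (0 <= RInt (tail_integrand t) (INR k + 1) (INR k + 2)).
  { apply RInt_ge_0; [lra|apply ex_RInt_tail_integrand; auto; lra|].
    intros z Hz. left. apply tail_integrand_pos; from_dom (INR k + 1). }
  lra.
Qed.

Lemma theta_n_S N n : log_dom t (INR N) -> (N <= n)%nat ->
  theta_n gamma t N (S n) = theta_n gamma t N n + theta_incr gamma t n.
Proof.
  intros HN Hn. assert (HNn : INR N <= INR n) by now apply le_INR.
  unfold theta_n, theta_incr. change (fun x => / (t + ln x)) with (inv_log t).
  rewrite sum_range_S, S_INR by auto.
  rewrite !Defs_RInt_eq by (apply ex_RInt_inv_log; auto; lra).
  rewrite <- (RInt_Chasles (inv_log t) (INR N) (INR n) (INR n + 1)).
  - unfold plus; simpl. ring.
  - apply ex_RInt_inv_log; auto.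
  - apply ex_RInt_inv_log; [from_dom (INR N)|lra].
Qed.

Lemma theta_n_lower n m : log_dom t (INR n) -> (n <= m)%nat ->
  RInt (tail_integrand t) (INR n + 1) (INR m + 1)
    + tail_majorant t (INR n + 1) - tail_majorant t (INR m + 1) <= theta_n gamma t n m.
Proof.
  intros Hn Hm. induction Hm as [|m Hm IH].
  - rewrite theta_n_diag, RInt_point. unfold zero; simpl. lra.
  - rewrite theta_n_S by auto.
    assert (Hm' : log_dom t (INR m)) by now apply (log_dom_INR_le t n).
    assert (A := theta_incr_lower m Hm').
    rewrite S_INR. replace (INR m + 1 + 1) with (INR m + 2) by ring.
    rewrite <- (RInt_Chasles (tail_integrand t) (INR n + 1) (INR m + 1) (INR m + 2)).
    + unfold plus; simpl. lra.
    + apply ex_RInt_tail_integrand; [from_dom (INR n)|].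
      assert (INR n <= INR m) by now apply le_INR. lra.
    + apply ex_RInt_tail_integrand; [from_dom (INR m)|lra].
Qed.

Lemma theta_n_upper n m : log_dom t (INR n) -> (S n <= m)%nat ->
  theta_n gamma t n m <= RInt (tail_integrand t) (INR n) (INR m) + inv_log2 t (INR n) / 24
    + tail_majorant t (INR n + /2) - tail_majorant t (INR m - /2).
Proof.
  intros Hn Hm. induction Hm as [|m Hm IH].
  - rewrite theta_n_S, theta_n_diag by auto.
    assert (A := theta_incr_upper n Hn).
    rewrite S_INR. replace (INR n + 1 - /2) with (INR n + /2) by field. lra.
  - rewrite theta_n_S by (auto; lia).
    assert (Hnm : INR n + 1 <= INR m) by (rewrite <- S_INR; now apply le_INR).
    assert (Hm' : log_dom t (INR m)) by from_dom (INR n).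
    assert (Hmh : log_dom t (INR m - /2)) by from_dom (INR n).
    assert (A := theta_incr_upper m Hm').
    assert (B := inv_log2_le_tail_majorant_diff t (INR m) Hmh).
    rewrite S_INR. replace (INR m + 1 - /2) with (INR m + /2) by field.
    rewrite <- (RInt_Chasles (tail_integrand t) (INR n) (INR m) (INR m + 1)).
    + unfold plus; simpl. lra.
    + apply ex_RInt_tail_integrand; auto; lra.
    + apply ex_RInt_tail_integrand; auto; lra.
Qed.

Lemma theta_n_increasing N m : log_dom t (INR N) -> (N <= m)%nat ->
  theta_n gamma t N m < theta_n gamma t N (S m).
Proof.
  intros HN Hm. rewrite theta_n_S by auto.
  assert (0 < theta_incr gamma t m) by (apply theta_incr_pos, (log_dom_INR_le t N); auto).
  lra.
Qed.

Lemma theta_n_pos N n : log_dom t (INR N) -> (N < n)%nat -> 0 < theta_n gamma t N n.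
Proof.
  intros HN Hn. induction Hn as [|n Hn IH].
  - rewrite <- (theta_n_diag gamma t N). now apply theta_n_increasing.
  - assert (theta_n gamma t N n < theta_n gamma t N (S n))
      by (apply theta_n_increasing; auto; lia).
    lra.
Qed.

Lemma theta_n_bounded N m : log_dom t (INR N) -> (N <= m)%nat ->
  theta_n gamma t N m
    <= tail_majorant t (INR N) + inv_log2 t (INR N) / 24 + tail_majorant t (INR N + /2).
Proof.
  intros HN Hm.
  assert (H1 := tail_majorant_pos t (INR N) HN).
  assert (H2 : 0 < tail_majorant t (INR N + /2))
    by (apply tail_majorant_pos; from_dom (INR N)).
  assert (H3 := inv_log2_pos t (INR N) HN).
  destruct (Nat.eq_dec N m) as [<-|Hne]; [rewrite theta_n_diag; lra|].
  assert (Hlt : (S N <= m)%nat) by lia.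
  assert (Hnm : INR N + 1 <= INR m) by (rewrite <- S_INR; now apply le_INR).
  assert (U := theta_n_upper N m HN Hlt).
  assert (H4 : 0 < tail_majorant t (INR m - /2))
    by (apply tail_majorant_pos; from_dom (INR N)).
  assert (H5 := RInt_tail_integrand_le t (INR N) (INR m) HN ltac:(lra)).
  assert (H6 : 0 < tail_majorant t (INR m)) by (apply tail_majorant_pos; from_dom (INR N)).
  lra.
Qed.

Lemma theta_n_cv N : log_dom t (INR N) -> Un_cv (theta_n gamma t N) (theta gamma t N).
Proof.
  intros HN.
  destruct (growing_cv (fun k => theta_n gamma t N (N + k))) as [l Hl].
  - intros k. rewrite <- plus_n_Sm. left. apply theta_n_increasing; auto. lia.
  - exists (tail_majorant t (INR N) + inv_log2 t (INR N) / 24 + tail_majorant t (INR N + /2)).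
    intros r [k ->]. apply theta_n_bounded; auto. lia.
  - assert (Hcv : Un_cv (theta_n gamma t N) l).
    { intros eps Heps. destruct (Hl eps Heps) as [K HK]. exists (N + K)%nat.
      intros m Hm. specialize (HK (m - N)%nat ltac:(lia)).
      now replace (N + (m - N))%nat with m in HK by lia. }
    now rewrite (theta_eq_lim gamma t N l Hcv).
Qed.

Lemma theta_n_le_theta N m : log_dom t (INR N) -> (N <= m)%nat ->
  theta_n gamma t N m <= theta gamma t N.
Proof.
  intros HN Hm.
  apply (is_lim_seq_le_loc (fun _ => theta_n gamma t N m) (theta_n gamma t N)
           (theta_n gamma t N m) (theta gamma t N));
    [|apply is_lim_seq_const|now apply is_lim_seq_Reals, theta_n_cv].
  exists m. intros k Hk. induction Hk; [lra|].
  assert (theta_n gamma t N m0 < theta_n gamma t N (S m0))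
    by (apply theta_n_increasing; auto; lia).
  lra.
Qed.

Lemma theta_pos N : log_dom t (INR N) -> 0 < theta gamma t N.
Proof.
  intros HN. apply Rlt_le_trans with (theta_n gamma t N (S N)).
  - apply theta_n_pos; auto.
  - apply theta_n_le_theta; auto.
Qed.

Lemma theta_shift N n : log_dom t (INR N) -> (N <= n)%nat ->
  theta gamma t N - theta_n gamma t N n = theta gamma t n.
Proof.
  intros HN Hn. assert (Hn' := log_dom_INR_le t N n HN Hn).
  symmetry. apply theta_eq_lim.
  apply is_lim_seq_Reals.
  apply is_lim_seq_ext_loc with (fun m => theta_n gamma t N m - theta_n gamma t N n).
  - exists n. intros m Hm. induction Hm; [rewrite theta_n_diag; ring|].
    rewrite !theta_n_S by (auto; lia). lra.
  - apply is_lim_seq_minus'; [now apply is_lim_seq_Reals, theta_n_cv|apply is_lim_seq_const].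
Qed.

Lemma theta_tail_bounds n : log_dom t (INR n) ->
  exists I1 I2,
    improper_int_cv (tail_integrand t) (INR n + 1) I1 /\
    improper_int_cv (tail_integrand t) (INR n) I2 /\
    I1 + tail_majorant t (INR n + 1) <= theta gamma t n /\
    theta gamma t n <= I2 + tail_majorant t (INR n + /2) + inv_log2 t (INR n) / 24 /\
    tail_majorant t (INR n + 1) / (1 + 2 / (t + ln (INR n + 1))) <= I1 /\
    I2 <= tail_majorant t (INR n).
Proof.
  intros Hn. assert (Hn1 : log_dom t (INR n + 1)) by from_dom (INR n).
  destruct (tail_integral_exists t (INR n + 1) Hn1) as [I1 [Hi1 [Hle1 HI1]]].
  destruct (tail_integral_exists t (INR n) Hn) as [I2 [Hi2 [Hle2 HI2]]].
  exists I1, I2. split; [auto|split; [auto|split; [|split; [|lra]]]].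
  - apply Rle_plus_epsilon. intros eps Heps.
    destruct (Hi1 (eps / 2) ltac:(lra)) as [M1 HM1].
    destruct (tail_majorant_small t (INR n + 1) (eps / 2) Hn1 ltac:(lra)) as [M2 [HM2 HM2b]].
    destruct (INR_archimed 1 (Rabs M1 + M2) ltac:(lra)) as [m Hm].
    rewrite Rmult_1_r in Hm. assert (Habs := Rle_abs M1). assert (Habs0 := Rabs_pos M1).
    assert (Hn0 := pos_INR n).
    assert (Hnm : (n <= m)%nat) by (apply INR_le; lra).
    assert (L := theta_n_lower n m Hn Hnm).
    assert (T := theta_n_le_theta n m Hn Hnm).
    specialize (HM1 (INR m + 1) ltac:(lra)).
    rewrite Defs_RInt_eq in HM1 by (apply ex_RInt_tail_integrand; auto; lra).
    apply Rabs_def2 in HM1.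
    specialize (HM2b (INR m + 1) ltac:(lra)).
    lra.
  - apply (lim_le_of_eventually_le (theta_n gamma t n));
      [now apply is_lim_seq_Reals, theta_n_cv|].
    exists (S n). intros m Hm.
    assert (U := theta_n_upper n m Hn Hm).
    assert (Hnm : INR n + 1 <= INR m) by (rewrite <- S_INR; now apply le_INR).
    assert (0 < tail_majorant t (INR m - /2)) by (apply tail_majorant_pos; from_dom (INR n)).
    assert (RInt (tail_integrand t) (INR n) (INR m) <= I2) by (apply Hle2; lra).
    lra.
Qed.

Lemma theta_two_sided n : log_dom t (INR n) ->
  tail_majorant t (INR n + 1) * (2 - 2 / (t + ln (INR n + 1))) <= theta gamma t n
  <= 2 * tail_majorant t (INR n) + inv_log2 t (INR n) / 24.
Proof.
  intros Hn. assert (Hn1 : log_dom t (INR n + 1)) by from_dom (INR n).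
  destruct (theta_tail_bounds n Hn) as [I1 [I2 [_ [_ [T1 [T2 [T3 T4]]]]]]].
  assert (HP1 := tail_majorant_pos t (INR n + 1) Hn1).
  assert (HPm := tail_majorant_decreasing t (INR n) (INR n + /2) Hn ltac:(lra)).
  assert (HK := one_lt_tail_factor t (INR n + 1) Hn1).
  set (P := tail_majorant t (INR n + 1)) in *. set (q := 2 / (t + ln (INR n + 1))) in *.
  assert (P * (1 - q) <= P / (1 + q)).
  { apply Rle_trans with (P * (1 - q) * (1 + q) / (1 + q)); [right; field; lra|].
    unfold Rdiv at 1. apply Rmult_le_compat_r; [left; solve_pos|nra]. }
  split; lra.
Qed.

End Theta.

Lemma theta_asymptotic gamma t N : Un_cv (fun n => harm n - ln (INR n)) gamma ->
  log_dom t (INR N) ->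
  is_lim_seq (fun n => (theta gamma t N - theta_n gamma t N n)
                       * (12 * INR n * ln (INR n) ^ 2)) 1.
Proof.
  intros Hg HN.
  set (r := fun c n => ln (INR n) / (t + ln (INR n + c))).
  set (w := fun c n => / (t + ln (INR n + c))).
  apply (is_lim_seq_le_le_loc
    (fun n => (1 - / (INR n + 1)) * (r 1 n * r 1 n) * (1 - w 1 n)) _
    (fun n => r 0 n * r 0 n + r 0 n * r 0 n * (1 + 2 * w 0 n) * (/ 2 / INR n)));
    unfold r, w; cbv beta.
  - exists (max N 2). intros n Hn.
    assert (Hn' : log_dom t (INR n)) by (apply (log_dom_INR_le t N); auto; lia).
    assert (Hn1 : log_dom t (INR n + 1)) by from_dom (INR n).
    assert (H2 : 2 <= INR n) by (apply (le_INR 2); lia).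
    rewrite (theta_shift gamma Hg t N n HN) by lia.
    destruct (theta_two_sided gamma Hg t n Hn') as [Lo Hi].
    assert (Hln : 0 < ln (INR n)) by (rewrite <- ln_1; apply ln_increasing; lra).
    assert (HF : 0 <= 12 * INR n * ln (INR n) ^ 2)
      by (apply Rmult_le_pos; [lra|apply pow_le; lra]).
    destruct Hn' as [_ HL], Hn1 as [_ HL1]. rewrite !Rplus_0_r.
    split.
    + eapply Rle_trans; [|apply Rmult_le_compat_r; [exact HF|exact Lo]].
      right. unfold tail_majorant. field. repeat split; lra.
    + eapply Rle_trans; [apply Rmult_le_compat_r; [exact HF|exact Hi]|].
      right. unfold tail_majorant, inv_log2. field. repeat split; lra.
  - replace (Finite 1) with (Finite ((1 - 0) * (1 * 1) * (1 - 0))) by (f_equal; ring).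
    apply is_lim_seq_mult'; [apply is_lim_seq_mult'|].
    + apply is_lim_seq_minus'; [apply is_lim_seq_const|].
      apply (lim0_of_le_div_INR _ 1). exists 1%nat. intros n Hn.
      assert (Hn1 := INR_ge_1 n Hn). split; [left; solve_pos|].
      unfold Rdiv. rewrite Rmult_1_l. apply Rinv_le_contravar; lra.
    + apply is_lim_seq_mult'; apply log_ratio_lim1; lra.
    + apply is_lim_seq_minus'; [apply is_lim_seq_const|apply inv_log_shift_lim0].
  - replace (Finite 1) with (Finite (1 * 1 + 1 * 1 * (1 + 2 * 0) * 0)) by (f_equal; ring).
    apply is_lim_seq_plus'; [apply is_lim_seq_mult'; apply log_ratio_lim1; lra|].
    apply is_lim_seq_mult'; [apply is_lim_seq_mult'|].
    + apply is_lim_seq_mult'; apply log_ratio_lim1; lra.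
    + apply is_lim_seq_plus'; [apply is_lim_seq_const|].
      apply is_lim_seq_mult'; [apply is_lim_seq_const|apply inv_log_shift_lim0].
    + apply (lim0_of_le_div_INR _ (/ 2)). exists 1%nat. intros n Hn.
      assert (Hn1 := INR_ge_1 n Hn). split; [unfold Rdiv; left; solve_pos|lra].
Qed.

Lemma theta_large_t gamma : Un_cv (fun n => harm n - ln (INR n)) gamma ->
  exists C T : R, forall (N : nat) (t : R), (1 <= N)%nat -> T <= t ->
    Rabs (theta gamma t N) <= C / (INR N * t ^ 2).
Proof.
  intros Hg. exists 1, 1. intros N t HN Ht.
  assert (Hx := INR_ge_1 N HN).
  assert (Hln : 0 <= ln (INR N)) by (rewrite <- ln_1; apply ln_le; lra).
  assert (Hdom : log_dom t (INR N)) by (split; lra).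
  rewrite Rabs_right by (left; apply theta_pos; auto).
  destruct (theta_two_sided gamma Hg t N Hdom) as [_ Hi].
  eapply Rle_trans; [exact Hi|].
  set (x := INR N) in *. set (L := t + ln x).
  assert (HtL : 1 <= t <= L) by (unfold L; lra).
  replace (2 * tail_majorant t x + inv_log2 t x / 24)
    with ((2 * x * L + L + 2) / (24 * x ^ 2 * L ^ 3))
    by (unfold tail_majorant, inv_log2; fold L; field; lra).
  apply Rle_trans with (5 / 24 * / (x * L ^ 2)).
  { replace (5 / 24 * / (x * L ^ 2)) with ((5 * x * L) / (24 * x ^ 2 * L ^ 3)) by (field; lra).
    unfold Rdiv. apply Rmult_le_compat_r; [left; solve_pos|].
    assert (0 <= (x - 1) * (L - 1)) by (apply Rmult_le_pos; lra). nra. }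
  apply Rle_trans with (5 / 24 * / (x * t ^ 2)).
  { apply Rmult_le_compat_l; [lra|]. apply Rinv_le_contravar; [solve_pos|].
    apply Rmult_le_compat_l; [lra|]. apply pow_incr; lra. }
  unfold Rdiv. rewrite Rmult_1_l. assert (0 < / (x * t ^ 2)) by solve_pos. lra.
Qed.

Theorem theorem3p3 (gamma : R)
  (Hgamma : Un_cv (fun n => harm n - ln (INR n)) gamma) :
  (forall (N : nat) (t : R), (1 <= N)%nat -> - ln (INR N) < t ->
    (* (1) *)
    ((forall n, (N < n)%nat -> 0 < theta_n gamma t N n) /\
     (forall n, (N < n)%nat -> theta_n gamma t N n < theta_n gamma t N (S n)) /\
     (exists M, forall n, (N < n)%nat -> theta_n gamma t N n <= M) /\
     Un_cv (fun n => theta_n gamma t N n) (theta gamma t N) /\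
     0 < theta gamma t N) /\
    (* (2) *)
    (forall n : nat, (N <= n)%nat ->
       theta gamma t N - theta_n gamma t N n = theta gamma t n /\
       exists I1 I2,
         improper_int_cv (fun x => / (24 * x ^ 2 * (t + ln x) ^ 2)) (INR n + 1) I1 /\
         improper_int_cv (fun x => / (24 * x ^ 2 * (t + ln x) ^ 2)) (INR n) I2 /\
         I1 + / (24 * (INR n + 1) * (t + ln (INR n + 1)) ^ 2) <= theta gamma t n /\
         theta gamma t n <=
           I2 + / (24 * (INR n + / 2) * (t + ln (INR n + / 2)) ^ 2)
              + / (24 * INR n ^ 2 * (t + ln (INR n)) ^ 2)
              + / (12 * INR n ^ 2 * (t + ln (INR n)) ^ 3)) /\
    (* (3a) *)
    Un_cv (fun n => (theta gamma t N - theta_n gamma t N n)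
                    * (12 * INR n * ln (INR n) ^ 2)) 1)
  /\
  (* (3b) *)
  (exists C T : R, forall (N : nat) (t : R), (1 <= N)%nat -> T <= t ->
     Rabs (theta gamma t N) <= C / (INR N * t ^ 2)).
Proof.
  split; [|exact (theta_large_t gamma Hgamma)].
  intros N t HN Ht.
  assert (Hdom : log_dom t (INR N)) by (split; [apply INR_ge_1 in HN|]; lra).
  split; [|split].
  - split; [|split; [|split; [|split]]].
    + intros n Hn. now apply theta_n_pos.
    + intros n Hn. apply theta_n_increasing; auto; lia.
    + eexists. intros n Hn. apply theta_n_bounded; auto; lia.
    + now apply theta_n_cv.
    + now apply theta_pos.
  - intros n Hn. split; [now apply theta_shift|].
    assert (Hn' := log_dom_INR_le t N n Hdom Hn).
    destruct (theta_tail_bounds gamma Hgamma t n Hn') as [I1 [I2 [Hi1 [Hi2 [T1 [T2 _]]]]]].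
    exists I1, I2. split; [exact Hi1|split; [exact Hi2|split; [exact T1|]]].
    rewrite (inv_log2_div24_eq t (INR n) Hn') in T2. unfold tail_majorant in T2. lra.
  - now apply is_lim_seq_Reals, theta_asymptotic.
Qed.
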